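(* Let $d\ge 1$ and let $X_1, X_2 \subset \mathbb{R}^d$ be finite nonempty sets of signals. For $\mathbf{x}=(x_1,\dots,x_d)$ and $0\le s\le d-1$ let $\mathbf{x}^s=(x_{s+1},x_{s+2},\dots,x_d,x_1,\dots,x_s)$ be its circular shift by $s$, and let $S_i=\{\mathbf{x}^s : \mathbf{x}\in X_i,\ 0\le s\le d-1\}$ for $i=1,2$. Let $f_{dc}(\mathbf{x})=\frac{1}{\sqrt d}\sum_{i=1}^d x_i$ and $\bar{\mathbf{w}}=\frac{1}{\sqrt d}\mathbf{1}_d$. Then $S_1$ and $S_2$ are linearly separable if and only if $\max_{\mathbf{x}_1\in S_1} f_{dc}(\mathbf{x}_1) < \min_{\mathbf{x}_2\in S_2} f_{dc}(\mathbf{x}_2)$ or $\max_{\mathbf{x}_2\in S_2} f_{dc}(\mathbf{x}_2) < \min_{\mathbf{x}_1\in S_1} f_{dc}(\mathbf{x}_1)$. Furthermore, if they are linearly separable and the first inequality holds, then the maximum margin equals $\min_{\mathbf{x}_2\in S_2} f_{dc}(\mathbf{x}_2)-\max_{\mathbf{x}_1\in S_1} f_{dc}(\mathbf{x}_1)$ (and symmetrically, with the roles of $S_1,S_2$ exchanged, if the second inequality holds), and this maximum margin is attained by a separating hyperplane with normal vector $\bar{\mathbf{w}}$.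
   Context: Two finite sets $A,B\subset\mathbb{R}^d$ are linearly separable if there exist a unit vector $\mathbf{w}\in\mathbb{R}^d$ and a threshold $T\in\mathbb{R}$ such that $\mathbf{w}^T\mathbf{a}<T<\mathbf{w}^T\mathbf{b}$ for all $\mathbf{a}\in A,\mathbf{b}\in B$, or the same with $A$ and $B$ exchanged. For a unit vector $\mathbf{w}$ with $A$ on the low side, the margin of $\mathbf{w}$ is $\min_{\mathbf{b}\in B}\mathbf{w}^T\mathbf{b}-\max_{\mathbf{a}\in A}\mathbf{w}^T\mathbf{a}$; the maximum margin is the supremum of this quantity over unit vectors $\mathbf{w}$. $\mathbf{1}_d$ denotes the all-ones vector in $\mathbb{R}^d$. *)

From HB Require Import structures.
From mathcomp Require Import all_boot all_order all_algebra.
From mathcomp Require Import boolp classical_sets reals.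
Set Implicit Arguments. Unset Strict Implicit. Unset Printing Implicit Defensive.
Import Order.TTheory GRing.Theory Num.Theory.
Local Open Scope ring_scope.
Local Open Scope classical_set_scope.

Section Defs.
Variable R : realType.
Variable d : nat.

Definition dotv (w x : 'rV[R]_d) : R := \sum_(i < d) w 0 i * x 0 i.

Definition unitv (w : 'rV[R]_d) : Prop := dotv w w = 1.

Lemma ord_pos (j : 'I_d) : (0 < d)%N.
Proof. exact: leq_ltn_trans (leq0n j) (ltn_ord j). Qed.

Definition circ_idx (s : nat) (j : 'I_d) : 'I_d :=
  Ordinal (ltn_pmod (j + s) (ord_pos j)).

(* circular shift x^s = (x_{s+1},...,x_d,x_1,...,x_s), i.e. (x^s)_j = x_{(j+s) mod d}
   with 0-based indices *)
Definition cshift (x : 'rV[R]_d) (s : nat) : 'rV[R]_d :=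
  \row_(j < d) x 0 (circ_idx s j).

Definition shifts (X : seq 'rV[R]_d) : seq 'rV[R]_d :=
  [seq cshift x s | x <- X, s <- iota 0 d].

(* maximum / minimum of f over a nonempty finite list (value 0 on the empty list,
   never used) *)
Definition maxf (f : 'rV[R]_d -> R) (s : seq 'rV[R]_d) : R :=
  if s is x :: s' then foldr (fun y m => Num.max (f y) m) (f x) s' else 0.
Definition minf (f : 'rV[R]_d -> R) (s : seq 'rV[R]_d) : R :=
  if s is x :: s' then foldr (fun y m => Num.min (f y) m) (f x) s' else 0.

Definition fdc (x : 'rV[R]_d) : R := (Num.sqrt (d%:R))^-1 * \sum_(i < d) x 0 i.

Definition wbar : 'rV[R]_d := \row_(i < d) (Num.sqrt (d%:R))^-1.

Definition separates (w : 'rV[R]_d) (T : R) (A B : seq 'rV[R]_d) : Prop :=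
  (forall a, a \in A -> dotv w a < T) /\ (forall b, b \in B -> T < dotv w b).

Definition lin_sep (A B : seq 'rV[R]_d) : Prop :=
  exists w T, unitv w /\ (separates w T A B \/ separates w T B A).

Definition margin (w : 'rV[R]_d) (A B : seq 'rV[R]_d) : R :=
  minf (dotv w) B - maxf (dotv w) A.

Definition max_margin (A B : seq 'rV[R]_d) : R :=
  sup [set margin w A B | w in unitv].

End Defs.

From HB Require Import structures.
From mathcomp Require Import all_boot all_order all_algebra.
From mathcomp Require Import boolp classical_sets reals.
From mathcomp Require Import ring lra.
Set Implicit Arguments. Unset Strict Implicit. Unset Printing Implicit Defensive.
Import Order.TTheory GRing.Theory Num.Theory.
Local Open Scope ring_scope.

(* The average of <w, x^s> over the d circular shifts of x is c * f_dc(x) with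
   c = <w, wbar>, and |c| <= 1 for a unit vector w by Cauchy-Schwarz.  Hence the
   best that any unit w can achieve on the shift-closed sets is governed by the
   values of f_dc alone: a separating w must have c != 0 and then orders the
   f_dc-values of S1 and S2 strictly, and its margin is at most
   c * (min_S2 f_dc - max_S1 f_dc), which wbar (c = 1) attains. *)

Lemma sup_eq_max (R : realType) (E : set R) x : E x -> ubound E x -> sup E = x.
Proof.
move=> Ex ubx; apply/eqP; rewrite eq_le ge_sup //=; last by exists x.
by apply: ub_le_sup => //; exists x.
Qed.

Section SeqExtrema.
Variables (R : realType) (d : nat).
Implicit Types (f : 'rV[R]_d -> R) (s : seq 'rV[R]_d).

Lemma minf_maxfN f s : minf f s = - maxf (fun x => - f x) s.
Proof.
case: s => [|x s] /=; first by rewrite oppr0.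
by elim: s => [|y s IH] /=; rewrite ?opprK // oppr_max opprK -IH.
Qed.

Lemma maxf_ub f s y : y \in s -> f y <= maxf f s.
Proof.
case: s => [//|x s] /=; elim: s => [|z s IH]; first by rewrite inE => /eqP->.
rewrite /= le_max !inE => /or3P[/eqP yx | /eqP-> | ys].
- by rewrite IH ?orbT // yx mem_head.
- by rewrite lexx.
- by rewrite IH ?orbT // inE ys orbT.
Qed.

Lemma maxf_mem f s : s != [::] -> exists2 y, y \in s & maxf f s = f y.
Proof.
case: s => [//|x s] _ /=; elim: s => [|z s [y ys IH]] /=.
  by exists x; rewrite ?mem_head.
rewrite IH; case: leP => _; last by exists z; rewrite // !inE eqxx orbT.
by exists y => //; move: ys; rewrite !inE => /orP[] ->; rewrite ?orbT.
Qed.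

Lemma minf_lb f s y : y \in s -> minf f s <= f y.
Proof. by move=> ys; rewrite minf_maxfN lerNl maxf_ub. Qed.

Lemma minf_mem f s : s != [::] -> exists2 y, y \in s & minf f s = f y.
Proof.
by move=> /(maxf_mem (fun x => - f x)) [y ys E]; exists y; rewrite // minf_maxfN E opprK.
Qed.

End SeqExtrema.

Section InnerProduct.
Variables (R : realType) (d : nat).
Implicit Types u v : 'rV[R]_d.

Lemma dotvC u v : dotv u v = dotv v u.
Proof. by apply: eq_bigr => i _; rewrite mulrC. Qed.

Lemma dotv_unit_le1 u v : unitv u -> unitv v -> dotv u v <= 1.
Proof.
move=> u1 v1.
have : 0 <= \sum_(i < d) (u 0 i - v 0 i) ^+ 2 by apply: sumr_ge0 => i _; apply: sqr_ge0.
rewrite (eq_bigr (fun i => u 0 i * u 0 i + v 0 i * v 0 i - (u 0 i * v 0 i) *+ 2));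
  last by move=> i _; ring.
rewrite sumrB big_split /= sumrMnl -[\sum_i u 0 i * u 0 i]/(dotv u u).
rewrite -[\sum_i v 0 i * v 0 i]/(dotv v v) -[\sum_i u 0 i * v 0 i]/(dotv u v) u1 v1.
lra.
Qed.

End InnerProduct.

Section Separation.
Variables (R : realType) (d : nat).
Implicit Types (w : 'rV[R]_d) (s t : seq 'rV[R]_d).

Lemma separates_maxf_lt_minf w T s t : s != [::] -> t != [::] ->
  separates w T s t -> maxf (dotv w) s < minf (dotv w) t.
Proof.
move=> /(maxf_mem (dotv w)) [a a_s ->] /(minf_mem (dotv w)) [b b_t ->] [lt1 lt2].
exact: lt_trans (lt1 a a_s) (lt2 b b_t).
Qed.

Lemma separates_midpoint w s t : maxf (dotv w) s < minf (dotv w) t ->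
  separates w ((maxf (dotv w) s + minf (dotv w) t) / 2) s t.
Proof.
move=> lt; split=> x xs.
  by have := maxf_ub (dotv w) xs; lra.
by have := minf_lb (dotv w) xs; lra.
Qed.

End Separation.

Section CircularShifts.
Variables (R : realType) (d : nat).
Hypothesis d_gt0 : (0 < d)%N.
Implicit Types (x w : 'rV[R]_d) (X A B : seq 'rV[R]_d).

Local Notation sqd := (Num.sqrt (d%:R : R)).
Local Notation f_dc := (@fdc R d).

Lemma sqd_sqr : sqd * sqd = d%:R.
Proof. by rewrite -expr2 sqr_sqrtr // ler0n. Qed.

Lemma invsqd_sqr : sqd^-1 * sqd^-1 * d%:R = 1.
Proof. by rewrite -invfM sqd_sqr mulVf // pnatr_eq0 -lt0n. Qed.

Lemma sum_circ_idx (F : 'I_d -> R) s : \sum_(j < d) F (circ_idx s j) = \sum_(j < d) F j.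
Proof.
symmetry; apply: (reindex_inj (h := circ_idx s)) => i j /(congr1 val) /= /eqP.
by rewrite eqn_modDr !modn_small // => /eqP /val_inj.
Qed.

Lemma sum_circ_idx_shift (F : 'I_d -> R) (j : 'I_d) :
  \sum_(s < d) F (circ_idx s j) = \sum_(i < d) F i.
Proof.
symmetry; apply: (reindex_inj (h := fun s : 'I_d => circ_idx s j)).
move=> i k /(congr1 val) /= /eqP.
by rewrite eqn_modDl !modn_small // => /eqP /val_inj.
Qed.

Lemma fdc_cshift x s : fdc (cshift x s) = fdc x.
Proof.
rewrite /fdc -(sum_circ_idx (fun j => x 0 j) s).
by congr (_ * _); apply: eq_bigr => j _; rewrite mxE.
Qed.

Lemma dotv_wbarE : dotv (wbar R d) = f_dc.
Proof.
by apply/funext => x; rewrite /dotv /fdc mulr_sumr; apply: eq_bigr => i _; rewrite mxE.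
Qed.

Lemma unitv_wbar : unitv (wbar R d).
Proof.
rewrite /unitv dotv_wbarE /fdc (eq_bigr (fun _ => sqd^-1)) => [|i _]; last by rewrite mxE.
by rewrite sumr_const card_ord mulrnAr -mulr_natr invsqd_sqr.
Qed.

Lemma sum_dotv_cshift w x :
  \sum_(s < d) dotv w (cshift x s) = d%:R * (dotv w (wbar R d) * fdc x).
Proof.
have -> : \sum_(s < d) dotv w (cshift x s) = (\sum_(i < d) w 0 i) * \sum_(i < d) x 0 i.
  rewrite /dotv exchange_big mulr_suml; apply: eq_bigr => j _.
  rewrite -mulr_sumr -(sum_circ_idx_shift (fun i => x 0 i) j).
  by congr (_ * _); apply: eq_bigr => s _; rewrite mxE.
by rewrite dotvC dotv_wbarE /fdc -[LHS]mul1r -{1}invsqd_sqr; ring.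
Qed.

Lemma mem_shifts x X s : x \in X -> (s < d)%N -> cshift x s \in shifts X.
Proof. by move=> xX sd; apply: allpairs_f => //; rewrite mem_iota. Qed.

Lemma shiftsP y X : y \in shifts X -> exists2 x, x \in X & exists s, y = cshift x s.
Proof. by case/allpairsP => -[x s] /= [xX _ ->]; exists x => //; exists s. Qed.

Lemma shifts_neq0 X : X != [::] -> shifts X != [::].
Proof.
case: X => [//|x X] _; apply/eqP => E.
by have := mem_shifts (mem_head x X) d_gt0; rewrite E.
Qed.

Lemma maxf_fdc_shifts X : X != [::] -> exists2 x, x \in X & maxf f_dc (shifts X) = fdc x.
Proof.
move=> /shifts_neq0 /(maxf_mem f_dc) [_ /shiftsP [x xX [s ->]] ->].
by exists x; rewrite ?fdc_cshift.
Qed.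

Lemma minf_fdc_shifts X : X != [::] -> exists2 x, x \in X & minf f_dc (shifts X) = fdc x.
Proof.
move=> /shifts_neq0 /(minf_mem f_dc) [_ /shiftsP [x xX [s ->]] ->].
by exists x; rewrite ?fdc_cshift.
Qed.

Lemma dotv_wbar_fdc_le_maxf w x X :
  x \in X -> dotv w (wbar R d) * fdc x <= maxf (dotv w) (shifts X).
Proof.
move=> xX; rewrite -(ler_pM2l (ltr0Sn _ d.-1)) prednK // -sum_dotv_cshift.
rewrite mulr_natl -[d in _ *+ d]card_ord -sumr_const.
by apply: ler_sum => s _; apply/maxf_ub/mem_shifts.
Qed.

Lemma minf_le_dotv_wbar_fdc w x X :
  x \in X -> minf (dotv w) (shifts X) <= dotv w (wbar R d) * fdc x.
Proof.
move=> xX; rewrite -(ler_pM2l (ltr0Sn _ d.-1)) prednK // -sum_dotv_cshift.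
rewrite mulr_natl -[d in _ *+ d]card_ord -sumr_const.
by apply: ler_sum => s _; apply/minf_lb/mem_shifts.
Qed.

Lemma separates_wbar (s t : seq 'rV[R]_d) : maxf f_dc s < minf f_dc t ->
  exists T, separates (wbar R d) T s t.
Proof. by rewrite -dotv_wbarE => /separates_midpoint sep; eexists; exact: sep. Qed.

Lemma separates_shifts_fdc w T A B : A != [::] -> B != [::] ->
  separates w T (shifts A) (shifts B) ->
  maxf f_dc (shifts A) < minf f_dc (shifts B) \/
  maxf f_dc (shifts B) < minf f_dc (shifts A).
Proof.
move=> nA nB /(separates_maxf_lt_minf (shifts_neq0 nA) (shifts_neq0 nB)) sep.
set c := dotv w (wbar R d).
have mono x y : x \in A -> y \in B -> c * fdc x < c * fdc y.
  move=> xA yB; apply: le_lt_trans (dotv_wbar_fdc_le_maxf w xA) _.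
  exact: lt_le_trans sep (minf_le_dotv_wbar_fdc w yB).
have [x1 x1A ->] := maxf_fdc_shifts nA.
have [y1 y1B ->] := minf_fdc_shifts nB.
have [y2 y2B ->] := maxf_fdc_shifts nB.
have [x2 x2A ->] := minf_fdc_shifts nA.
case: (ltgtP c 0) => c0.
- by right; rewrite -(ltr_nM2l c0); apply: mono.
- by left; rewrite -(ltr_pM2l c0); apply: mono.
- by have := mono _ _ x1A y1B; rewrite c0 !mul0r ltxx.
Qed.

Lemma margin_shifts_le w A B : unitv w -> A != [::] -> B != [::] ->
  maxf f_dc (shifts A) <= minf f_dc (shifts B) ->
  margin w (shifts A) (shifts B) <= minf f_dc (shifts B) - maxf f_dc (shifts A).
Proof.
move=> w1 nA nB.
have [x xA ->] := maxf_fdc_shifts nA.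
have [y yB ->] := minf_fdc_shifts nB.
rewrite -subr_ge0 => gap_ge0.
have c_le1 : dotv w (wbar R d) <= 1 := dotv_unit_le1 w1 unitv_wbar.
apply: (@le_trans _ _ (dotv w (wbar R d) * (fdc y - fdc x))).
  by rewrite mulrBr lerB ?minf_le_dotv_wbar_fdc ?dotv_wbar_fdc_le_maxf.
by rewrite -[leRHS]mul1r ler_wpM2r.
Qed.

Lemma wbar_max_margin A B : A != [::] -> B != [::] ->
  maxf f_dc (shifts A) < minf f_dc (shifts B) ->
  max_margin (shifts A) (shifts B) = minf f_dc (shifts B) - maxf f_dc (shifts A) /\
  margin (wbar R d) (shifts A) (shifts B) = max_margin (shifts A) (shifts B) /\
  (exists T, separates (wbar R d) T (shifts A) (shifts B)).
Proof.
move=> nA nB lt.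
have margin_wbar : margin (wbar R d) (shifts A) (shifts B) =
    minf f_dc (shifts B) - maxf f_dc (shifts A) by rewrite /margin dotv_wbarE.
have max_marginE : max_margin (shifts A) (shifts B) =
    minf f_dc (shifts B) - maxf f_dc (shifts A).
  apply: sup_eq_max; first by exists (wbar R d); [exact: unitv_wbar | exact: margin_wbar].
  by move=> _ [w w1 <-]; apply: margin_shifts_le => //; apply: ltW.
by rewrite max_marginE margin_wbar; split=> //; split=> //; apply: separates_wbar.
Qed.

End CircularShifts.

Theorem theorem1 (R : realType) (d : nat) (X1 X2 : seq 'rV[R]_d) :
  (0 < d)%N -> X1 != [::] -> X2 != [::] ->
  let S1 := shifts X1 in
  let S2 := shifts X2 in
  (lin_sep S1 S2 <->
     (maxf (@fdc R d) S1 < minf (@fdc R d) S2 \/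
      maxf (@fdc R d) S2 < minf (@fdc R d) S1)) /\
  (lin_sep S1 S2 -> maxf (@fdc R d) S1 < minf (@fdc R d) S2 ->
     max_margin S1 S2 = minf (@fdc R d) S2 - maxf (@fdc R d) S1 /\
     margin (wbar R d) S1 S2 = max_margin S1 S2 /\
     (exists T, separates (wbar R d) T S1 S2)) /\
  (lin_sep S1 S2 -> maxf (@fdc R d) S2 < minf (@fdc R d) S1 ->
     max_margin S2 S1 = minf (@fdc R d) S1 - maxf (@fdc R d) S2 /\
     margin (wbar R d) S2 S1 = max_margin S2 S1 /\
     (exists T, separates (wbar R d) T S2 S1)).
Proof.
move=> d_gt0 nX1 nX2 S1 S2.
split; [split | by split=> _; apply: wbar_max_margin].
- case=> w [T [_ [sep | sep]]]; first exact: separates_shifts_fdc sep.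
  by rewrite or_comm; exact: separates_shifts_fdc sep.
- case=> /separates_wbar [T sep]; exists (wbar R d), T.
  + by split; [exact: unitv_wbar | left].
  + by split; [exact: unitv_wbar | right].
Qed.
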